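(* Let $E$ and $D$ be open ellipsoids in $\mathbb{R}^n$, $n\ge2$ (sets of the form $\{x: {}^t(x-c)P(x-c)<1\}$ with $P$ positive definite), whose boundaries do not intersect transversally at any point, i.e. at every point of $\partial E\cap\partial D$ the normal vectors to $\partial E$ and $\partial D$ are linearly dependent. If $E\cap D\ne\emptyset$, then $E\subset D$ or $D\subset E$. *)

From HB Require Import structures.
From mathcomp Require Import all_boot all_order all_algebra.
From mathcomp Require Import reals.
Set Implicit Arguments. Unset Strict Implicit. Unset Printing Implicit Defensive.
Import Order.TTheory GRing.Theory Num.Theory.
Local Open Scope ring_scope.

Definition qform (R : realType) (n : nat) (P : 'M[R]_n) (c x : 'cV[R]_n) : R :=
  (((x - c)^T *m P *m (x - c)) 0 0).

Definition posdef (R : realType) (n : nat) (P : 'M[R]_n) : Prop :=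
  P^T = P /\ forall x : 'cV[R]_n, x != 0 -> 0 < ((x^T *m P *m x) 0 0).

Definition ellipsoid (R : realType) (n : nat) (P : 'M[R]_n) (c : 'cV[R]_n)
  : 'cV[R]_n -> Prop := fun x => qform P c x < 1.

Definition ellipsoid_boundary (R : realType) (n : nat) (P : 'M[R]_n) (c : 'cV[R]_n)
  : 'cV[R]_n -> Prop := fun x => qform P c x = 1.

(* normal vector to the boundary at x: the gradient 2 P (x - c) of the
   defining quadratic function *)
Definition ellipsoid_normal (R : realType) (n : nat) (P : 'M[R]_n) (c x : 'cV[R]_n)
  : 'cV[R]_n := 2%:R *: (P *m (x - c)).

Definition lin_dep (R : realType) (n : nat) (u v : 'cV[R]_n) : Prop :=
  exists a b : R, (a != 0 \/ b != 0) /\ a *: u + b *: v = 0.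

(* If neither ellipsoid contains the other, convexity yields points w and w'
   of the boundary of E = {q_P < 1}, with w inside D = {q_Q < 1} and w' outside
   its closure.  Pick b != 0 tangent to the boundary of E at w.  Stereographic
   projection from w parametrises the conic cut out of that boundary by the
   plane through w spanned by w' - w and b, rationally in t, with t = 0 giving
   w' and t -> +-oo giving back w.  Clearing denominators, q_Q - 1 along the
   conic becomes a quartic that is positive at 0 and has negative leading
   coefficient, hence has a positive and a negative root.  At a root the conic
   meets the boundary of D, where by hypothesis the two boundaries are tangent;
   then q_Q - 1 restricted to the boundary of E is a quadratic form in the
   displacement from the contact point, so the root is double.  But a quartic
   with two double roots has the sign of its leading coefficient at 0. *)

From HB Require Import structures.
From mathcomp Require Import all_boot all_order all_algebra.
From mathcomp Require Import reals polyrcf ring lra zify.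
From Stdlib Require Import Classical.
Set Implicit Arguments. Unset Strict Implicit. Unset Printing Implicit Defensive.
Import Order.TTheory GRing.Theory Num.Theory.
Local Open Scope ring_scope.

Section BilinearForm.
Variables (R : comNzRingType) (n : nat) (A : 'M[R]_n).

Definition bil (u v : 'cV[R]_n) : R := (u^T *m A *m v) 0 0.

Lemma bilDl u1 u2 v : bil (u1 + u2) v = bil u1 v + bil u2 v.
Proof. by rewrite /bil linearD /= !mulmxDl mxE. Qed.

Lemma bilDr u v1 v2 : bil u (v1 + v2) = bil u v1 + bil u v2.
Proof. by rewrite /bil mulmxDr mxE. Qed.

Lemma bilZl k u v : bil (k *: u) v = k * bil u v.
Proof. by rewrite /bil linearZ /= -!scalemxAl mxE. Qed.

Lemma bilZr k u v : bil u (k *: v) = k * bil u v.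
Proof. by rewrite /bil -!scalemxAr mxE. Qed.

Lemma bil0l v : bil 0 v = 0.
Proof. by rewrite /bil trmx0 !mul0mx mxE. Qed.

Lemma bilE u v : bil u v = (u^T *m (A *m v)) 0 0.
Proof. by rewrite /bil mulmxA. Qed.

Hypothesis symA : A^T = A.

Lemma bilC u v : bil u v = bil v u.
Proof.
rewrite /bil -[in LHS](trmxK (u^T *m A *m v)) [in LHS]mxE.
by rewrite !trmx_mul trmxK symA mulmxA.
Qed.

Lemma bil_sqrD u v : bil (u + v) (u + v) = bil u u + 2 * bil u v + bil v v.
Proof. rewrite bilDl !bilDr (bilC v u); ring. Qed.

Lemma bil_sqr_comb p q u v :
  bil (p *: u + q *: v) (p *: u + q *: v) =
  p ^+ 2 * bil u u + 2 * p * q * bil u v + q ^+ 2 * bil v v.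
Proof. rewrite bil_sqrD !bilZl !bilZr; ring. Qed.

Lemma bil_sqrDZ u v t :
  bil (u + t *: v) (u + t *: v) = bil u u + 2 * t * bil u v + t ^+ 2 * bil v v.
Proof. rewrite bil_sqrD !bilZl !bilZr; ring. Qed.

End BilinearForm.

Lemma qformE (R : realType) n (P : 'M[R]_n) c x :
  qform P c x = bil P (x - c) (x - c).
Proof. by []. Qed.

Lemma qformDr (R : realType) n (P : 'M[R]_n) c x v : P^T = P ->
  qform P c (x + v) = qform P c x + 2 * bil P v (x - c) + bil P v v.
Proof.
by move=> symP; rewrite !qformE addrAC bil_sqrD // (bilC symP (x - c) v).
Qed.

Lemma qform_segment (R : realType) n (P : 'M[R]_n) c x y s : P^T = P ->
  qform P c (x + s *: (y - x)) =
  (1 - s) * qform P c x + s * qform P c y - s * (1 - s) * bil P (y - x) (y - x).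
Proof.
move=> symP; rewrite -{2}(subrKC x y) !qformDr // !bilZl !bilZr; ring.
Qed.

Lemma quadratic_pos_root (R : rcfType) (A B C : R) : 0 < A -> C < 0 ->
  exists s, 0 < s /\ A * s ^+ 2 + 2 * B * s + C = 0 /\
   forall t, 0 <= t -> (A * t ^+ 2 + 2 * B * t + C < 0 <-> t < s).
Proof.
move=> A_gt0 C_lt0; pose D := B ^+ 2 - A * C.
have D_gtB2 : B ^+ 2 < D by rewrite /D ltrDl oppr_gt0 pmulr_rlt0.
have D_gt0 : 0 < D by apply: le_lt_trans D_gtB2; exact: sqr_ge0.
pose sq := Num.sqrt D.
have sq2 : sq ^+ 2 = D by rewrite sqr_sqrtr // ltW.
have B_lt : `|B| < sq by rewrite -sqrtr_sqr /sq ltr_sqrt.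
pose s := (sq - B) / A; pose s' := (- sq - B) / A.
have factor t : A * t ^+ 2 + 2 * B * t + C = (A * (t - s')) * (t - s).
  have -> : C = (B ^+ 2 - sq ^+ 2) / A by rewrite sq2 /D; field; rewrite gt_eqF.
  by rewrite /s /s'; field; rewrite gt_eqF.
have s_gt0 : 0 < s by rewrite divr_gt0 // subr_gt0 (le_lt_trans (ler_norm B)).
have s'_lt0 : s' < 0.
  have : - B < sq by rewrite (le_lt_trans _ B_lt) // -normrN ler_norm.
  rewrite /s' pmulr_llt0 ?invr_gt0 //; lra.
exists s; split => //; split; first by rewrite factor subrr mulr0.
move=> t t_ge0; rewrite factor pmulr_rlt0 ?subr_lt0 //.
by rewrite mulr_gt0 // subr_gt0 (lt_le_trans s'_lt0).
Qed.

Section EllipsoidGeometry.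
Variables (R : realType) (n : nat).
Implicit Types (P Q : 'M[R]_n) (c d x y z : 'cV[R]_n).

Lemma posdef_gt0 P v : posdef P -> v != 0 -> 0 < bil P v v.
Proof. by move=> [_ P_pos] /P_pos. Qed.

Lemma posdef_ge0 P v : posdef P -> 0 <= bil P v v.
Proof.
move=> hP; have [->|v0] := eqVneq v 0; first by rewrite bil0l.
exact/ltW/posdef_gt0.
Qed.

Lemma ellipsoid_ray_exit P c x y : posdef P -> ellipsoid P c x -> y != x ->
  exists s, 0 < s /\ ellipsoid_boundary P c (x + s *: (y - x)) /\
    forall t, 0 <= t -> (ellipsoid P c (x + t *: (y - x)) <-> t < s).
Proof.
move=> hP xE yx; have symP : P^T = P by case: hP.
have qE t : qform P c (x + t *: (y - x)) - 1 =
    bil P (y - x) (y - x) * t ^+ 2 + 2 * bil P (y - x) (x - c) * t +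
    (qform P c x - 1).
  by rewrite qformDr // !bilZl bilZr; ring.
have u_gt0 : 0 < bil P (y - x) (y - x) by rewrite posdef_gt0 // subr_eq0.
have C_lt0 : qform P c x - 1 < 0 by rewrite subr_lt0.
have [s [s_gt0 [s_root s_sign]]] :=
  quadratic_pos_root (bil P (y - x) (x - c)) u_gt0 C_lt0.
exists s; split => //; split; first by apply/eqP; rewrite -subr_eq0 qE s_root.
by move=> t t_ge0; rewrite -s_sign // -qE subr_lt0.
Qed.

Lemma exists_boundary_point_inside P Q c d x z : posdef P -> posdef Q ->
  ellipsoid P c x -> ellipsoid Q d x -> ellipsoid Q d z -> ~ ellipsoid P c z ->
  exists w, ellipsoid_boundary P c w /\ ellipsoid Q d w.
Proof.
move=> hP hQ xE xD zD zE; have symQ : Q^T = Q by case: hQ.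
have zx : z != x by apply: contraPneq zE => ->.
have [s [s_gt0 [wE s_exit]]] := ellipsoid_ray_exit hP xE zx.
have s_le1 : s <= 1.
  by rewrite leNgt; apply/negP => /(s_exit 1 ler01); rewrite scale1r subrKC.
exists (x + s *: (z - x)); split => //; rewrite /ellipsoid qform_segment //.
have : 0 <= s * (1 - s) * bil Q (z - x) (z - x).
  by rewrite !mulr_ge0 ?posdef_ge0 ?subr_ge0 // ltW.
move: xD zD; rewrite /ellipsoid; nra.
Qed.

Lemma exists_boundary_point_outside P Q c d x y : posdef P -> posdef Q ->
  ellipsoid P c x -> ellipsoid Q d x -> ellipsoid P c y -> ~ ellipsoid Q d y ->
  exists w, ellipsoid_boundary P c w /\ 1 < qform Q d w.
Proof.
move=> hP hQ xE xD yE yD; have symQ : Q^T = Q by case: hQ.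
have yx : y != x by apply: contraPneq yD => ->.
have [s [s_gt0 [wE s_exit]]] := ellipsoid_ray_exit hP xE yx.
have s_gt1 : 1 < s by apply/(s_exit 1 ler01); rewrite scale1r subrKC.
exists (x + s *: (y - x)); split => //; rewrite qform_segment //.
have : 0 <= s * (s - 1) * bil Q (y - x) (y - x).
  by rewrite !mulr_ge0 ?posdef_ge0 ?subr_ge0 // ltW.
have : 1 <= qform Q d y by rewrite leNgt; apply/negP.
move: xD; rewrite /ellipsoid; nra.
Qed.

Lemma tangent_normals_proportional P Q c d x : ellipsoid_boundary P c x ->
  lin_dep (ellipsoid_normal P c x) (ellipsoid_normal Q d x) ->
  exists mu, forall v, bil Q v (x - d) = mu * bil P v (x - c).
Proof.
move=> xE [a [b [ab_neq0]]]; rewrite /ellipsoid_normal !scalerA.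
have two_neq0 : 2 != 0 :> R by rewrite pnatr_eq0.
have [b0|b_neq0] := eqVneq b 0.
  have a_neq0 : a != 0 by case: ab_neq0 => // /negP; rewrite b0 eqxx.
  move/eqP; rewrite b0 mul0r scale0r addr0 scaler_eq0 mulf_eq0.
  rewrite (negbTE a_neq0) (negbTE two_neq0) => /eqP Px0.
  move: xE; rewrite /ellipsoid_boundary qformE bilE Px0 mulmx0 mxE => /eqP.
  by rewrite eq_sym oner_eq0.
move/eqP; rewrite addr_eq0 => /eqP Qx.
exists (- a / b) => v; rewrite !bilE.
have -> : Q *m (x - d) = (- a / b) *: (P *m (x - c)).
  apply: (scalerI (mulf_neq0 b_neq0 two_neq0)).
  by rewrite scalerA -[LHS]opprK -Qx -scaleNr; congr (_ *: _); field.
by rewrite -scalemxAr mxE.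
Qed.

Lemma tangent_qform P Q c d x y mu : P^T = P -> Q^T = Q ->
  ellipsoid_boundary P c x -> ellipsoid_boundary Q d x ->
  ellipsoid_boundary P c y ->
  (forall v, bil Q v (x - d) = mu * bil P v (x - c)) ->
  qform Q d y - 1 = bil Q (y - x) (y - x) - mu * bil P (y - x) (y - x).
Proof.
move=> symP symQ xE xD; rewrite /ellipsoid_boundary; set v := y - x.
have -> : y = x + v by rewrite subrKC.
rewrite !qformDr // xE xD => yE tangent; rewrite tangent.
have -> : bil P v v = - (2 * bil P v (x - c)) by lra.
ring.
Qed.

End EllipsoidGeometry.

Lemma exists_orthogonal_vector (F : fieldType) n (p : 'cV[F]_n) : (2 <= n)%N ->
  exists2 b : 'cV[F]_n, b != 0 & b^T *m p = 0.
Proof.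
move=> n_ge2; have : kermx p != 0.
  apply: contraTneq n_ge2 => K0; have := mxrank_ker p; rewrite K0 mxrank0.
  have := rank_leq_col p; lia.
by case/rowV0Pn => v /sub_kermxP vp v0; exists v^T; rewrite ?trmxK ?trmx_eq0.
Qed.

Lemma eq_poly_horner (R : numDomainType) (p q : {poly R}) :
  (forall x, p.[x] = q.[x]) -> p = q.
Proof.
move=> pq; apply/eqP; rewrite -subr_eq0; apply/eqP.
apply: (@roots_geq_poly_eq0 _ _ [seq i%:R | i <- iota 0 (size (p - q))]).
- by apply/allP => x /mapP [i _ ->]; rewrite /root !hornerE pq subrr.
- by rewrite map_inj_uniq ?iota_uniq // => i j /eqP; rewrite eqr_nat => /eqP.
- by rewrite size_map size_iota.
Qed.

Lemma poly_pos_root (R : rcfType) (p : {poly R}) :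
  lead_coef p < 0 -> 0 < p.[0] -> exists2 r, 0 < r & root p r.
Proof.
move=> lc_lt0 p0_gt0.
have [m m_big] : exists m, forall x, m <= x -> lead_coef (- p) <= (- p).[x].
  by apply: poly_pinfty_gt_lc; rewrite lead_coefN oppr_gt0.
pose b := Num.max m 1.
have pb_lt0 : p.[b] < 0.
  have := m_big b; rewrite le_max lexx lead_coefN hornerN => /(_ isT); lra.
have b_gt0 : 0 < b by rewrite lt_max ltr01 orbT.
have [|r] := @poly_ivtoo _ p 0 b (ltW b_gt0); first by rewrite pmulr_rlt0.
by rewrite in_itv /= => /andP [r_gt0 _]; exists r.
Qed.

Lemma quartic_not_all_double_roots (R : rcfType) (p : {poly R}) :
  size p = 5%N -> lead_coef p < 0 -> 0 < p.[0] ->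
  ~ (forall r, root p r -> ('X - r%:P) ^+ 2 %| p).
Proof.
move=> p_size lc_lt0 p0_gt0 double.
have [r1 r1_gt0 r1_root] := poly_pos_root lc_lt0 p0_gt0.
have [r2 r2_gt0 r2_root] : exists2 r, 0 < r & root p (- r).
  have X_size : size (- 'X : {poly R}) = 2 by rewrite size_polyN size_polyX.
  have lc_comp : lead_coef (p \Po - 'X) < 0.
    rewrite lead_coef_comp ?X_size // p_size lead_coefN lead_coefX.
    by rewrite -signr_odd expr0 mulr1.
  have comp0 : 0 < (p \Po - 'X).[0] by rewrite horner_comp !hornerE oppr0.
  have [r r_gt0 r_root] := poly_pos_root lc_comp comp0.
  by exists r => //; move: r_root; rewrite /root horner_comp !hornerE.
pose q : {poly R} := ('X - r1%:P) ^+ 2 * ('X - (- r2)%:P) ^+ 2.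
have /dvdpP [k p_eq] : q %| p.
  rewrite Gauss_dvdp ?double //; apply/coprimep_expl/coprimep_expr.
  by rewrite coprimep_XsubC2 // -opprD oppr_eq0 gt_eqF ?addr_gt0.
have q_monic : q \is monic by rewrite rpredM ?monic_exp ?monicXsubC.
have q_size : size q = 5%N.
  by rewrite /q size_mul ?expf_neq0 ?polyXsubC_eq0 // !size_exp_XsubC.
have k_size : size k = 1%N.
  have k_neq0 : k != 0.
    by apply: contraTneq lc_lt0 => k0; rewrite p_eq k0 mul0r lead_coef0 ltxx.
  move: p_size; rewrite p_eq size_Mmonic // q_size addnS /=.
  by move=> /(congr1 (subn^~ 4%N)); rewrite addnK.
have k_const : k = (lead_coef p)%:P.
  rewrite p_eq lead_coef_Mmonic // lead_coefE k_size.
  by rewrite [LHS]size1_polyC ?k_size.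
move: p0_gt0; rewrite p_eq k_const hornerCM hornerM !horner_exp !hornerXsubC.
by rewrite nmulr_rgt0 // ltNge mulr_ge0 ?sqr_ge0.
Qed.

Section StereographicProjection.
Variables (R : realType) (n : nat) (P Q : 'M[R]_n) (c d w a b : 'cV[R]_n).
Hypotheses (posP : posdef P) (symQ : Q^T = Q).
Hypotheses (wE : ellipsoid_boundary P c w)
           (waE : ellipsoid_boundary P c (w + a)).
Hypotheses (a_neq0 : a != 0) (b_orth : bil P b (w - c) = 0).

Let symP : P^T = P. Proof. by case: posP. Qed.
Let al := bil P a a.
Let be := bil P a b.
Let ga := bil P b b.

Let al_gt0 : 0 < al. Proof. exact: posdef_gt0. Qed.

Definition stereo_denom t := al + 2 * be * t + ga * t ^+ 2.

(* The second point where the line through w in direction a + t b meets the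
   boundary of the P-ellipsoid. *)
Definition stereo t := w + (al / stereo_denom t) *: (a + t *: b).

Lemma stereo_denomE t : bil P (a + t *: b) (a + t *: b) = stereo_denom t.
Proof. by rewrite bil_sqrDZ // /stereo_denom /al /be /ga; ring. Qed.

Lemma bil_dir_center t : bil P (a + t *: b) (w - c) = - al / 2.
Proof.
move: waE; rewrite /ellipsoid_boundary qformDr // wE => waE'.
rewrite bilDl bilZl b_orth mulr0 addr0 /al; lra.
Qed.

Lemma stereo_denom_gt0 t : 0 < stereo_denom t.
Proof.
rewrite -stereo_denomE posdef_gt0 //; apply: contraTneq al_gt0 => dir0.
by move: (bil_dir_center t); rewrite dir0 bil0l; lra.
Qed.

Lemma stereo_boundary t : ellipsoid_boundary P c (stereo t).
Proof.
rewrite /ellipsoid_boundary qformDr // wE !bilZl bilZr.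
rewrite bil_dir_center stereo_denomE.
by field; rewrite gt_eqF ?stereo_denom_gt0.
Qed.

Lemma stereo0 : stereo 0 = w + a.
Proof.
rewrite /stereo /stereo_denom scale0r addr0 mulr0 expr0n /= mulr0 !addr0.
by rewrite divff ?gt_eqF // scale1r.
Qed.

Let g0 := qform Q d w - 1.
Let ma := bil Q a (w - d).
Let mb := bil Q b (w - d).
Let kaa := bil Q a a.
Let kab := bil Q a b.
Let kbb := bil Q b b.

(* stereo_denom t ^ 2 * (qform Q d (stereo t) - 1), expanded in powers of t. *)
Definition stereo_poly : {poly R} := Poly
  [:: g0 * al ^+ 2 + 2 * al * al * ma + al ^+ 2 * kaa;
      4 * g0 * al * be + 2 * al * (al * mb + 2 * be * ma) + 2 * al ^+ 2 * kab;
      g0 * (4 * be ^+ 2 + 2 * al * ga) + 2 * al * (2 * be * mb + ga * ma) +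
        al ^+ 2 * kbb;
      4 * g0 * be * ga + 2 * al * ga * mb;
      g0 * ga ^+ 2].

Lemma horner_stereo_poly t :
  stereo_poly.[t] = stereo_denom t ^+ 2 * (qform Q d (stereo t) - 1).
Proof.
have N_neq0 := lt0r_neq0 (stereo_denom_gt0 t).
rewrite qformDr // !bilZl bilZr bilDl bilZl bil_sqrDZ // horner_Poly /=.
rewrite /stereo_denom in N_neq0 *; rewrite /g0 /ma /mb /kaa /kab /kbb.
by field.
Qed.

Lemma stereo_poly_size_lead : g0 != 0 -> b != 0 ->
  size stereo_poly = 5%N /\ lead_coef stereo_poly = g0 * ga ^+ 2.
Proof.
move=> g0_neq0 b_neq0; have ga_gt0 : 0 < ga by exact: posdef_gt0.
have lc_neq0 : g0 * ga ^+ 2 != 0 by rewrite mulf_neq0 // expf_neq0 // lt0r_neq0.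
by rewrite lead_coefE /stereo_poly (@PolyK _ 0).
Qed.

Lemma stereo_poly_root r :
  root stereo_poly r -> ellipsoid_boundary Q d (stereo r).
Proof.
rewrite /root horner_stereo_poly mulf_eq0 expf_eq0 gt_eqF ?stereo_denom_gt0 //=.
by rewrite subr_eq0 => /eqP.
Qed.

Lemma stereo_poly_double_root r mu :
  ellipsoid_boundary Q d (stereo r) ->
  (forall v, bil Q v (stereo r - d) = mu * bil P v (stereo r - c)) ->
  ('X - r%:P) ^+ 2 %| stereo_poly.
Proof.
move=> rD tangent.
(* By tangency, stereo_denom t ^ 2 * (qform Q d (stereo t) - 1) is a quadratic
   form in the coordinates of the chord from stereo r to stereo t, both of
   which carry a factor (t - r). *)
pose Ka := kaa - mu * al; pose Kb := kab - mu * be; pose Kc := kbb - mu * ga.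
pose L := (2 * be + ga * r)%:P + ga%:P * 'X.
pose M := al%:P - (ga * r)%:P * 'X.
pose q := Ka%:P * L ^+ 2 - (2 * Kb)%:P * (L * M) + Kc%:P * M ^+ 2.
have Nr_neq0 := lt0r_neq0 (stereo_denom_gt0 r).
have chord t : stereo t - stereo r =
    (al / stereo_denom t - al / stereo_denom r) *: a +
    (al / stereo_denom t * t - al / stereo_denom r * r) *: b.
  rewrite /stereo !scalerDr !scalerA opprD addrACA subrr add0r opprD addrACA.
  by rewrite -!scalerBl.
suff factor : (stereo_denom r ^+ 2)%:P * stereo_poly =
    ('X - r%:P) ^+ 2 * ((al ^+ 2)%:P * q).
  by rewrite -(dvdpZr _ _ (expf_neq0 2 Nr_neq0)) -mul_polyC factor dvdp_mulIl.
apply: eq_poly_horner => t; have Nt_neq0 := lt0r_neq0 (stereo_denom_gt0 t).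
rewrite hornerCM horner_stereo_poly.
rewrite (tangent_qform symP symQ (stereo_boundary r) rD (stereo_boundary t)
  tangent).
rewrite chord !bil_sqr_comb //.
rewrite !(hornerD, hornerN, hornerM, hornerC, hornerX, horner_exp, hornerXsubC).
rewrite /q /Ka /Kb /Kc /kaa /kab /kbb -/al -/be -/ga.
by rewrite /stereo_denom in Nt_neq0 Nr_neq0 *; field; rewrite Nt_neq0 Nr_neq0.
Qed.

Lemma stereo_crossing_not_tangent :
  ellipsoid Q d w -> 1 < qform Q d (w + a) -> b != 0 ->
  ~ (forall x, ellipsoid_boundary P c x -> ellipsoid_boundary Q d x ->
       exists mu, forall v, bil Q v (x - d) = mu * bil P v (x - c)).
Proof.
move=> wD waD b_neq0 tangent.
have g0_lt0 : g0 < 0 by rewrite subr_lt0.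
have [size5 lc] := stereo_poly_size_lead (ltr0_neq0 g0_lt0) b_neq0.
apply: (quartic_not_all_double_roots size5).
- by rewrite lc pmulr_llt0 // exprn_gt0 // posdef_gt0.
- rewrite horner_stereo_poly stereo0.
  by rewrite mulr_gt0 ?exprn_gt0 ?stereo_denom_gt0 // subr_gt0.
move=> r /stereo_poly_root rD.
have [mu tangent_r] := tangent _ (stereo_boundary r) rD.
exact: stereo_poly_double_root rD tangent_r.
Qed.

End StereographicProjection.

Lemma tangent_boundaries_no_crossing (R : realType) n (P Q : 'M[R]_n) c d w w' :
  (2 <= n)%N -> posdef P -> posdef Q ->
  (forall x, ellipsoid_boundary P c x -> ellipsoid_boundary Q d x ->
     lin_dep (ellipsoid_normal P c x) (ellipsoid_normal Q d x)) ->
  ellipsoid_boundary P c w -> ellipsoid Q d w ->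
  ellipsoid_boundary P c w' -> 1 < qform Q d w' -> False.
Proof.
move=> n_ge2 hP hQ nontrans wE wD w'E w'D; have symQ : Q^T = Q by case: hQ.
have [b b_neq0 b_orth] := exists_orthogonal_vector (P *m (w - c)) n_ge2.
have w'_eq : w' = w + (w' - w) by rewrite subrKC.
have w'w_neq0 : w' - w != 0.
  by rewrite subr_eq0; apply: contraTneq w'D => ->; rewrite -leNgt ltW.
rewrite w'_eq in w'E w'D.
apply: (stereo_crossing_not_tangent hP symQ wE w'E w'w_neq0 _ wD w'D b_neq0).
  by rewrite bilE b_orth mxE.
move=> x xE xD; exact: tangent_normals_proportional xE (nontrans x xE xD).
Qed.

Theorem proposition2p4 (R : realType) (n : nat) (hn : (2 <= n)%N)
  (P Q : 'M[R]_n) (c d : 'cV[R]_n) (hP : posdef P) (hQ : posdef Q)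
  (hnontrans : forall x : 'cV[R]_n,
     ellipsoid_boundary P c x -> ellipsoid_boundary Q d x ->
     lin_dep (ellipsoid_normal P c x) (ellipsoid_normal Q d x))
  (hmeet : exists x : 'cV[R]_n, ellipsoid P c x /\ ellipsoid Q d x) :
  (forall x, ellipsoid P c x -> ellipsoid Q d x) \/
  (forall x, ellipsoid Q d x -> ellipsoid P c x).
Proof.
have [[y [yE yD]]|ED] :=
    classic (exists y, ellipsoid P c y /\ ~ ellipsoid Q d y);
  last by left => x xE; apply: NNPP => xD; apply: ED; exists x.
have [[z [zD zE]]|DE] :=
    classic (exists z, ellipsoid Q d z /\ ~ ellipsoid P c z);
  last by right => x xD; apply: NNPP => xE; apply: DE; exists x.
have [z0 [z0E z0D]] := hmeet.
have [w [wE wD]] := exists_boundary_point_inside hP hQ z0E z0D zD zE.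
have [w' [w'E w'D]] := exists_boundary_point_outside hP hQ z0E z0D yE yD.
by case: (tangent_boundaries_no_crossing hn hP hQ hnontrans wE wD w'E w'D).
Qed.
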